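(* Let $\psi(u,v)$ be a satisfiable conjunction of difference constraints between two integer variables $u,v$ such that every pair satisfying $\psi$ has $u\le v$ and $\psi(m,m)$ holds for every integer $m$ (i.e. $\psi$ contains $u\le v$ but no conjunct $u\le v-c$ with $c>0$). Let $n\ge3$. Then $\exists S_3,\dots,S_{n-1}.\ \bigwedge_{2\le i\le n-1}\Big(S_i=S_{i+1}\cup\{\min(S_i)\}\wedge\max(S_i)=\max(S_{i+1})\wedge\psi(\min(S_i),\min(S_{i+1}))\Big)$ is equivalent to $S_n\neq\emptyset\wedge S_n\subseteq S_2\wedge|S_2\setminus S_n|\le n-2\wedge\big(S_2\setminus S_n\neq\emptyset\rightarrow\max(S_2\setminus S_n)<\min(S_n)\big)\wedge\forall y,z.\ \big(\mathsf{succ}((S_2\setminus S_n)\cup\{\min(S_n)\},y,z)\rightarrow\psi(y,z)\big)$.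
   Context: Set variables range over finite subsets of $\mathbb{Z}$, integer variables over $\mathbb{Z}$; $\min,\max$ of the empty set are undefined and atoms containing undefined terms are false. $\mathsf{succ}(S,x,y)$ abbreviates $x\in S\wedge y\in S\wedge x<y\wedge\forall z\in S.\,(z\le x\vee y\le z)$. $|\cdot|$ is cardinality. *)

(* Finite subsets of Z are represented by [seq int],
   read up to membership (all notions below are invariant under =i). *)
From mathcomp Require Import all_boot all_order all_algebra.
Set Implicit Arguments. Unset Strict Implicit. Unset Printing Implicit Defensive.
Import Order.TTheory GRing.Theory Num.Theory.
Local Open Scope ring_scope.

Inductive dconstr : Type :=
  | DC_uv of int
  | DC_vu of int.

Definition dsat (d : dconstr) (u v : int) : Prop :=
  match d with
  | DC_uv c => u - v <= c
  | DC_vu c => v - u <= c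
  end.

Definition dconj := seq dconstr.

Definition psat (psi : dconj) (u v : int) : Prop :=
  foldr (fun d P => dsat d u v /\ P) True psi.

Definition is_min (S : seq int) (m : int) : Prop :=
  m \in S /\ forall x, x \in S -> m <= x.
Definition is_max (S : seq int) (m : int) : Prop :=
  m \in S /\ forall x, x \in S -> x <= m.

Definition setDi (S T : seq int) : seq int := [seq x <- S | x \notin T].
Definition cardi (S : seq int) : nat := size (undup S).

Definition succ (S : seq int) (x y : int) : Prop :=
  x \in S /\ y \in S /\ x < y /\ forall z, z \in S -> z <= x \/ y <= z.

(* One step of the chain, i in 2..n-1, with undefined-term atoms false:
   S_i = S_{i+1} ∪ {min S_i}  /\  max S_i = max S_{i+1}
   /\  psi(min S_i, min S_{i+1}). *)
Definition chain_step (psi : dconj) (Si Si1 : seq int) : Prop :=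
  (exists m, is_min Si m /\ Si =i m :: Si1) /\
  (exists a, is_max Si a /\ is_max Si1 a) /\
  (exists a b, is_min Si a /\ is_min Si1 b /\ psat psi a b).

From mathcomp Require Import all_boot all_order all_algebra zify.
Import Order.TTheory GRing.Theory Num.Theory.
Local Open Scope ring_scope.
Set Implicit Arguments. Unset Strict Implicit. Unset Printing Implicit Defensive.

(* Write D(T) for S2 \ T.  A chain S2 = S_2, ..., S_n = Sn removes one
   element at a time, always the current minimum, so the removed elements
   form an increasing sequence lying below min Sn, and consecutive minima
   are consecutive in D(Sn) ∪ {min Sn}.

   Backward direction: list D(Sn) increasingly as d_0 < d_1 < ... and take
   S_(2+j) = Sn ∪ {d_j, d_(j+1), ...}; its minimum is d_j (or min Sn once
   the list is exhausted, where only psi(m, m) is needed). *)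

Lemma ex_min (s : seq int) x : x \in s -> exists m, is_min s m.
Proof.
elim: s x => // y [|z s] IH _ _.
  by exists y; split=> [|w]; rewrite mem_seq1 // => /eqP->.
have [m [ms mmin]] := IH z (mem_head z s).
exists (Order.min y m); split.
  by rewrite /Order.min; case: ifP => _; rewrite ?mem_head // in_cons ms orbT.
by move=> w; rewrite inE ge_min => /orP[/eqP->|/mmin->]; rewrite ?lexx ?orbT.
Qed.

Lemma ex_max (s : seq int) x : x \in s -> exists m, is_max s m.
Proof.
elim: s x => // y [|z s] IH _ _.
  by exists y; split=> [|w]; rewrite mem_seq1 // => /eqP->.
have [m [ms mmax]] := IH z (mem_head z s).
exists (Order.max y m); split.
  by rewrite /Order.max; case: ifP => _; rewrite ?mem_head // in_cons ms orbT.
by move=> w; rewrite inE le_max => /orP[/eqP->|/mmax->]; rewrite ?lexx ?orbT.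
Qed.

Lemma is_min_uniq s a b : is_min s a -> is_min s b -> a = b.
Proof. by move=> [aS amin] [bS bmin]; apply: le_anti; rewrite amin ?bmin. Qed.

Lemma is_min_eqi s s' m : s =i s' -> is_min s m -> is_min s' m.
Proof. by move=> E [ms mmin]; split=> [|x]; rewrite -E //; apply: mmin. Qed.

Lemma is_max_eqi s s' m : s =i s' -> is_max s m -> is_max s' m.
Proof. by move=> E [ms mmax]; split=> [|x]; rewrite -E //; apply: mmax. Qed.

Lemma mem_setDi x S T : (x \in setDi S T) = (x \in S) && (x \notin T).
Proof. by rewrite mem_filter andbC. Qed.

Lemma setDi_eqi S T T' : T =i T' -> setDi S T =i setDi S T'.
Proof. by move=> E x; rewrite !mem_setDi E. Qed.

Lemma cardi_sub A B : {subset A <= B} -> (cardi A <= cardi B)%N.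
Proof.
move=> AB; apply: uniq_leq_size; first exact: undup_uniq.
by move=> x; rewrite !mem_undup => /AB.
Qed.

Lemma cardi_cons m A : (cardi (m :: A) <= (cardi A).+1)%N.
Proof. by rewrite /cardi /=; case: (m \in A). Qed.

Lemma succ_sub L L' y z : {subset L' <= L} -> y \in L' -> z \in L' ->
  succ L y z -> succ L' y z.
Proof.
move=> L'L yL' zL' [_ [_ [yz between]]].
by split=> //; split=> //; split=> // w /L'L /between.
Qed.

Lemma succ_eqi L L' y z : L =i L' -> succ L y z -> succ L' y z.
Proof.
move=> E yz; have [yL [zL _]] := yz.
by apply: succ_sub yz; [move=> x; rewrite E | rewrite -E | rewrite -E].
Qed.

Lemma succ_cons_top (L : seq int) m b y z :
  m \in L -> (forall x, x \in L -> x <= m) -> m < b ->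
  succ (b :: L) y z -> (y = m /\ z = b) \/ succ L y z.
Proof.
move=> mL Lm mb yz; have [yL [zL [ltyz between]]] := yz.
have in_L_below w : w < z -> z <= b -> w \in b :: L -> w \in L.
  move=> wz zb; rewrite inE => /orP[/eqP wb|//].
  by move: (lt_le_trans wz zb); rewrite wb ltxx.
case: (z =P b) => [zb|zNb].
  have yL' : y \in L by apply: in_L_below ltyz _ yL; rewrite zb.
  left; split=> //; apply: le_anti; rewrite Lm //=.
  by case: (between m); rewrite ?inE ?mL ?orbT // zb leNgt mb.
have zL' : z \in L by move: zL; rewrite inE => /orP[/eqP|].
right; apply: succ_sub yz => //; first by move=> w wL; rewrite inE wL orbT.
by apply: in_L_below ltyz (ltW (le_lt_trans (Lm z zL') mb)) yL.
Qed.

Lemma succ_sorted_nth (s : seq int) x0 j : sorted <%R s -> (j.+1 < size s)%N ->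
  succ s (nth x0 s j) (nth x0 s j.+1).
Proof.
move=> ss js; have jlt : (j < size s)%N := ltnW js.
split; [exact: mem_nth | split; [exact: mem_nth | split]].
  by rewrite (lt_sorted_ltn_nth x0 ss) ?inE.
move=> w /(nthP x0)[i ilt <-].
by case: (leqP i j) => ij; [left | right]; rewrite (lt_sorted_leq_nth x0 ss) ?inE.
Qed.

Lemma sorted_rcons_top (s : seq int) b : sorted <%R s ->
  (forall x, x \in s -> x < b) -> sorted <%R (rcons s b).
Proof.
case: s => //= x s ss sb; rewrite rcons_path ss /=.
by apply: sb; rewrite -[_ :: _]/(x :: s) mem_last.
Qed.

Lemma chain_step_eqi psi A B A' B' :
  A =i A' -> B =i B' -> chain_step psi A B -> chain_step psi A' B'.
Proof.
move=> EA EB [[m [mA AmB]] [[a [aA aB]] [x [y [xA [yB xy]]]]]].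
split; [|split].
- exists m; split; first exact: is_min_eqi mA.
  by move=> z; rewrite -EA AmB !inE EB.
- by exists a; split; [exact: is_max_eqi aA | exact: is_max_eqi aB].
- by exists x, y; split; [exact: is_min_eqi xA | split; [exact: is_min_eqi yB |]].
Qed.

Section Forward.
Variables (psi : dconj) (S2 : seq int).

(* Invariant of a set T reached after t steps of a chain starting at S2. *)
Definition chain_inv (t : nat) (T : seq int) : Prop :=
  exists m, [/\ is_min T m, {subset T <= S2},
    (forall x, x \in setDi S2 T -> x < m),
    (forall y z, succ (m :: setDi S2 T) y z -> psat psi y z) &
    (cardi (setDi S2 T) <= t)%N].

Lemma chain_inv_base m : is_min S2 m -> chain_inv 0 S2.
Proof.
move=> mS2; have noD : setDi S2 S2 = [::].
  by rewrite /setDi (@eq_in_filter _ _ pred0) ?filter_pred0 // => x ->.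
exists m; split=> //; rewrite noD // => y z [].
by rewrite !mem_seq1 => /eqP-> [/eqP-> []]; rewrite ltxx.
Qed.

Lemma chain_inv_eqi t T T' : T =i T' -> chain_inv t T -> chain_inv t T'.
Proof.
move=> E [m [mT TS2 gap sc card]]; have ED := setDi_eqi S2 E.
exists m; split.
- exact: is_min_eqi mT.
- by move=> x; rewrite -E; apply: TS2.
- by move=> x; rewrite -ED; apply: gap.
- by move=> y z yz; apply: sc; apply: (succ_eqi _ yz) => x; rewrite !inE ED.
- by apply: leq_trans (cardi_sub _) card => x; rewrite ED.
Qed.

(* One chain step A -> B = A \ {min A} preserves the invariant: either min A
   stays in B (then B = A), or it joins D(B) just below the new minimum,
   and the only new successor pair (min A, min B) satisfies psi by the step. *)
Lemma chain_inv_step t A B : chain_step psi A B -> chain_inv t A -> chain_inv t.+1 B.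
Proof.
move=> [[m0 [m0A AmB]] [_ [a [b [aA [bB psi_ab]]]]]] [m [mA AS2 gap sc card]].
rewrite (is_min_uniq m0A mA) in AmB; rewrite (is_min_uniq aA mA) in psi_ab.
have BA : {subset B <= A} by move=> x xB; rewrite AmB inE xB orbT.
have [mB|mNB] := boolP (m \in B).
  have AB : A =i B by move=> x; rewrite AmB inE; case: eqP => // ->.
  apply: chain_inv_eqi AB _.
  by exists m; split=> //; apply: leqW.
have ED : setDi S2 B =i m :: setDi S2 A.
  move=> x; rewrite inE !mem_setDi AmB inE.
  by case: (x =P m) => [->|] //=; rewrite AS2 ?mNB //; case: mA.
have belowm x : x \in m :: setDi S2 A -> x <= m.
  by rewrite inE => /orP[/eqP->//|/gap/ltW].
have mb : m < b.
  rewrite lt_neqAle; case: mA => _ -> ; last by apply: BA; case: bB.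
  by rewrite andbT; apply: contraNneq mNB => ->; case: bB.
exists b; split=> //.
- by move=> x /BA /AS2.
- by move=> x; rewrite ED => /belowm /le_lt_trans; apply.
- move=> y z yz; have bD : b :: setDi S2 B =i b :: m :: setDi S2 A.
    by move=> x; rewrite !inE ED inE.
  have [[-> ->] //|] := succ_cons_top (mem_head _ _) belowm mb (succ_eqi bD yz).
  exact: sc.
- have DB : {subset setDi S2 B <= m :: setDi S2 A} by move=> x; rewrite ED.
  by apply: leq_trans (cardi_sub DB) (leq_trans (cardi_cons m _) _); rewrite ltnS.
Qed.

Lemma chain_inv_along (n : nat) (S : nat -> seq int) : (3 <= n)%N -> S 2%N = S2 ->
  (forall i, (2 <= i)%N -> (i <= n.-1)%N -> chain_step psi (S i) (S i.+1)) ->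
  chain_inv (n - 2) (S n).
Proof.
move=> n3 S2E chain.
suff inv t : (2 + t <= n)%N -> chain_inv t (S (2 + t)%N).
  by have := inv (n - 2)%N; rewrite subnKC ?(ltnW n3) //; apply.
elim: t => [_|t IH tn].
  have two_le : (2 <= n.-1)%N by lia.
  have [_ [_ [m [_ [mS2 _]]]]] := chain 2%N (leqnn 2) two_le.
  by rewrite addn0 S2E in mS2 *; apply: chain_inv_base mS2.
by rewrite addnS; apply: chain_inv_step (chain _ _ _) (IH _); lia.
Qed.

Lemma chain_inv_summary t T : chain_inv t T ->
  (exists x, x \in T) /\ {subset T <= S2} /\ (cardi (setDi S2 T) <= t)%N /\
  ((exists x, x \in setDi S2 T) ->
     exists a b, is_max (setDi S2 T) a /\ is_min T b /\ a < b) /\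
  (forall y z, (exists m, is_min T m /\ succ (m :: setDi S2 T) y z) -> psat psi y z).
Proof.
move=> [m [mT TS2 gap sc card]]; split; first by exists m; case: mT.
do 2!split=> //; split.
  move=> [x xD]; have [a amax] := ex_max xD.
  by exists a, m; split=> //; split=> //; apply: gap; case: amax.
by move=> y z [m' [m'T yz]]; apply: sc; rewrite (is_min_uniq mT m'T).
Qed.

End Forward.

Definition gap_list (S2 Sn : seq int) : seq int := sort <=%R (undup (setDi S2 Sn)).

Section Backward.
Variables (psi : dconj) (S2 Sn : seq int) (b : int).
Hypothesis psi_diag : forall m, psat psi m m.
Hypothesis b_min : is_min Sn b.
Hypothesis gap_below : forall x, x \in setDi S2 Sn -> x < b.
Hypothesis succ_psi : forall y z, succ (b :: setDi S2 Sn) y z -> psat psi y z.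

Local Notation D := (gap_list S2 Sn).

Lemma mem_gap_list x : (x \in D) = (x \in setDi S2 Sn).
Proof. by rewrite mem_sort mem_undup. Qed.

Lemma gap_list_sorted : sorted <%R D.
Proof. by rewrite sort_lt_sorted undup_uniq. Qed.

Lemma gap_list_below x : x \in D -> x < b.
Proof. by rewrite mem_gap_list; apply: gap_below. Qed.

Lemma interm_min j : is_min (Sn ++ drop j D) (nth b D j).
Proof.
have [jD|Dj] := ltnP j (size D); last by rewrite nth_default // drop_oversize // cats0.
have dj_below := gap_list_below (mem_nth b jD).
have := subseq_sorted lt_trans (drop_subseq D j) gap_list_sorted.
rewrite (drop_nth b jD) /= => /(order_path_min lt_trans)/allP above_dj.
split; first by rewrite mem_cat mem_head orbT.
move=> x; rewrite mem_cat inE => /orP[xSn|/orP[/eqP->//|/above_dj/ltW//]].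
by apply/ltW/(lt_le_trans dj_below); case: b_min => _; apply.
Qed.

Lemma interm_max M j : is_max Sn M -> is_max (Sn ++ drop j D) M.
Proof.
move=> [MSn Mmax]; split=> [|x]; first by rewrite mem_cat MSn.
rewrite mem_cat => /orP[/Mmax//|/mem_drop/gap_list_below xb].
by apply/ltW/(lt_le_trans xb)/Mmax; case: b_min.
Qed.

Lemma interm_cons j : Sn ++ drop j D =i nth b D j :: (Sn ++ drop j.+1 D).
Proof.
move=> x; have [jD|Dj] := ltnP j (size D).
  by rewrite (drop_nth b jD) !(mem_cat, inE) orbCA.
rewrite nth_default // !drop_oversize ?(leq_trans Dj) // cats0 inE.
by case: (x =P b) => // ->; case: b_min.
Qed.

(* Consecutive minima satisfy psi: they are consecutive in D ∪ {b}, or both b. *)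
Lemma interm_psi j : psat psi (nth b D j) (nth b D j.+1).
Proof.
have [Dj|jD] := leqP (size D) j.
  by rewrite !nth_default ?(leq_trans Dj) //; apply: psi_diag.
apply: succ_psi; rewrite -(nth_rcons_default b D j) -(nth_rcons_default b D j.+1).
apply: (succ_eqi _ (succ_sorted_nth _ _ _)); last by rewrite size_rcons.
  by move=> x; rewrite mem_rcons !inE mem_gap_list.
exact: sorted_rcons_top gap_list_sorted gap_list_below.
Qed.

Lemma interm_step j : chain_step psi (Sn ++ drop j D) (Sn ++ drop j.+1 D).
Proof.
have [M Mmax] : exists M, is_max Sn M by case: b_min => bSn _; apply: ex_max bSn.
split; [|split].
- by exists (nth b D j); split; [apply: interm_min | apply: interm_cons].
- by exists M; split; apply: interm_max.
- exists (nth b D j), (nth b D j.+1).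
  by split; [|split]; [exact: interm_min.. | exact: interm_psi].
Qed.

(* The backward construction: S_2 = S2 and S_i = Sn ++ drop (i - 2) D for
   i > 2, which ends at Sn because |D| <= n - 2. *)
Lemma chain_from_gaps (n : nat) : (3 <= n)%N -> {subset Sn <= S2} ->
  (cardi (setDi S2 Sn) <= n - 2)%N ->
  exists S : nat -> seq int, S 2%N = S2 /\ S n = Sn /\
    forall i, (2 <= i)%N -> (i <= n.-1)%N -> chain_step psi (S i) (S i.+1).
Proof.
move=> n3 SnS2 card.
pose S i := if i == 2%N then S2 else Sn ++ drop (i - 2) D.
exists S; split; first by rewrite /S eqxx.
split.
  rewrite /S ifN_eq ?drop_oversize ?cats0 // ?size_sort //; lia.
move=> i i2 _; apply: chain_step_eqi (interm_step (i - 2)).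
  rewrite /S; case: eqP => [->|//]; rewrite subnn drop0 => x.
  rewrite mem_cat mem_gap_list mem_setDi.
  by case: (boolP (x \in Sn)) => [/SnS2 ->|]; rewrite ?andbT.
by rewrite /S ifN_eq ?subSn //; lia.
Qed.

End Backward.

Theorem mainTheorem7 (psi : dconj)
    (Hsat : exists u v, psat psi u v)
    (Hle : forall u v, psat psi u v -> u <= v)
    (Hdiag : forall m, psat psi m m)
    (n : nat) (Hn : (3 <= n)%N) (S2 Sn : seq int) :
  (exists S : nat -> seq int,
      S 2%N = S2 /\ S n = Sn /\
      forall i : nat, (2 <= i)%N -> (i <= n.-1)%N -> chain_step psi (S i) (S i.+1))
  <->
  ((exists x, x \in Sn) /\
   {subset Sn <= S2} /\
   (cardi (setDi S2 Sn) <= n - 2)%N /\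
   ((exists x, x \in setDi S2 Sn) ->
      exists a b, is_max (setDi S2 Sn) a /\ is_min Sn b /\ a < b) /\
   (forall y z : int,
      (exists m, is_min Sn m /\ succ (m :: setDi S2 Sn) y z) -> psat psi y z)).
Proof.
split.
  move=> [S [S2E [SnE chain]]].
  by rewrite -SnE; apply/chain_inv_summary/(chain_inv_along Hn S2E chain).
move=> [[x xSn] [SnS2 [card [gap_max succ_psi]]]].
have [b b_min] := ex_min xSn.
have gap_below y : y \in setDi S2 Sn -> y < b.
  move=> yD; have [a [b' [[_ amax] [b'_min ab']]]] := gap_max (ex_intro _ y yD).
  by rewrite (is_min_uniq b_min b'_min); apply: le_lt_trans (amax y yD) ab'.
apply: (chain_from_gaps Hdiag b_min gap_below) => //.
by move=> y z yz; apply: succ_psi; exists b.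
Qed.
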